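(* Let $0<r'<r<1$. There exists $f_{r'}\in\mathbb{Z}((T))_{>r}$ such that for every extremally disconnected set $S$, the kernel of the ring homomorphism $\theta_{r'}:\mathbb{Z}((T))_r(S)\to C(S,\mathbb{R})$, $\sum a_nT^n\mapsto\big(s\mapsto\sum a_n(s)(r')^n\big)$, is the ideal $f_{r'}\cdot\mathbb{Z}((T))_r(S)$ (where $f_{r'}$ is regarded as an element of $\mathbb{Z}((T))_r(S)$ with constant coefficient functions).
   Context: Extremally disconnected sets are the projective objects in the category of compact Hausdorff spaces. For $0<r<1$ and extremally disconnected $S$, $\mathbb{Z}((T))_r(S)$ is the ring of formal sums $\sum_{n\ge k}a_nT^n$ (some $k\in\mathbb{Z}$) with $a_n\in C(S,\mathbb{Z})$ such that there is $c>0$ with $\sum_n|a_n(s)|r^n\le c$ for all $s\in S$. $\mathbb{Z}((T))_{>r}$ is the ring of integer Laurent series $\sum_{n\gg-\infty}a_nT^n$ such that $|a_n|(r'')^n\to 0$ for some $r''>r$. *)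

From HB Require Import structures.
From mathcomp Require Import all_boot all_order all_algebra.
From mathcomp Require Import all_classical all_reals all_analysis.
Set Implicit Arguments. Unset Strict Implicit. Unset Printing Implicit Defensive.
Import Order.TTheory GRing.Theory Num.Theory.
Import numFieldNormedType.Exports.
Local Open Scope classical_set_scope.
Local Open Scope ring_scope.

Definition extremally_disconnected (S : topologicalType) : Prop :=
  forall U : set S, open U -> open (closure U).

(* continuity of a : S -> Z for the discrete topology on Z *)
Definition locally_constant (S : topologicalType) (a : S -> int) : Prop :=
  forall s : S, \forall t \near s, a t = a s.

(* Z((T))_r(S): coefficient families a : int -> C(S,Z), vanishing below some
   k, with sum_n |a_n(s)| r^n bounded uniformly in s (partial sums bounded,
   the terms being nonnegative). *)
Definition ZLr (R : realType) (r : R) (S : topologicalType)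
    (a : int -> S -> int) : Prop :=
  (forall n, locally_constant (a n)) /\
  exists k : int, (forall n s, n < k -> a n s = 0) /\
    exists c : R, forall (s : S) (N : nat),
      \sum_(i < N) ((`|a (k + i%:Z) s|)%:~R * r ^ (k + i%:Z)) <= c.

Definition ZLgt (R : realType) (r : R) (f : int -> int) : Prop :=
  (exists k : int, forall n, n < k -> f n = 0) /\
  exists r2 : R, r < r2 /\
    (fun i : nat => (`|f i%:Z|)%:~R * r2 ^ i%:Z) @ \oo --> (0 : R).

(* theta_{r'}(a)(s) = sum_n a_n(s) r'^n (symmetric partial sums; the
   coefficients vanish for n << 0) *)
Definition theta (R : realType) (r' : R) (S : topologicalType)
    (a : int -> S -> int) (s : S) : R :=
  lim ((fun N : nat => \sum_(i < (2 * N).+1)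
          ((a (i%:Z - N%:Z) s)%:~R * r' ^ (i%:Z - N%:Z))) @ \oo).

(* g = f * h (Cauchy product of Laurent series, f with constant integer
   coefficients):  g_n(s) = sum_{kf <= i <= n - kh} f_i h_{n-i}(s) *)
Definition is_laurent_prod (S : topologicalType) (f : int -> int)
    (h g : int -> S -> int) : Prop :=
  exists kf kh : int,
    (forall n, n < kf -> f n = 0) /\ (forall n s, n < kh -> h n s = 0) /\
    forall n s, g n s =
      if n < kf + kh then 0
      else \sum_(j < (absz (n - (kf + kh))%R).+1) f (kf + j%:Z) * h (n - kf - j%:Z) s.

(* The series f = (1 - T/r') (1 + c_1 T) (1 + c_2 T^2) ..., each correction
   c_j in (-1, 0] being chosen to make the next coefficient an integer, has
   integral coefficients, f_0 = 1 and f(r') = 0, and converges on the unit disc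
   since sum_j |c_j| rho^j < oo for rho < 1.  If theta_r'(g) = 0, the m-th
   coefficient of g / (1 - T/r') is -r'^-m sum_(i > m) g_i r'^i, so it is
   summable against r^m; dividing further by the factors 1 + c_j T^j costs at
   most the convergent product of the 1 + r^(j+1) / (1 - r).  The quotient
   h = g / f is integral because f_0 = 1, and locally constant because h_n only
   depends on g_k, ..., g_n.  Conversely, writing f = (1 - T/r') w, the partial
   sums of g = f h at r' telescope to (w h)_N r'^N, which tends to 0. *)

From HB Require Import structures.
From mathcomp Require Import all_boot all_order all_algebra.
From mathcomp Require Import all_classical all_reals all_analysis.
From mathcomp Require Import zify ring lra.
Set Implicit Arguments. Unset Strict Implicit. Unset Printing Implicit Defensive.
Import Order.TTheory GRing.Theory Num.Theory.
Import numFieldNormedType.Exports.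
Local Open Scope classical_set_scope.
Local Open Scope ring_scope.

Section BinomialFactors.
Variable R : comPzRingType.
Implicit Types (a b : nat -> R) (c : R).

(* Coefficients of (1 + c T^j) a and of (1 + c T^j)^-1 a. *)
Definition mul_binom c (j : nat) a : nat -> R :=
  fun m => a m + (if (j <= m)%N then c * a (m - j)%N else 0).

Definition div_binom c (j : nat) a : nat -> R :=
  fun m => \sum_(t < (m %/ j).+1) (- c) ^+ t * a (m - t * j)%N.

Lemma div_binomK c j : (0 < j)%N -> cancel (div_binom c j) (mul_binom c j).
Proof.
move=> j0 a; apply: funext => m; rewrite /mul_binom /div_binom.
case: leqP => jm; last first.
  by rewrite divn_small // big_ord1 expr0 mul1r mul0n subn0 addr0.
have -> : (m %/ j = ((m - j) %/ j).+1)%N.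
  by rewrite -[j in (m - j)%N]mul1n divnBMl subn1 prednK // divn_gt0.
rewrite big_ord_recl /= expr0 mul1r mul0n subn0 -addrA.
rewrite mulr_sumr -big_split /= big1 ?addr0 // => i _.
by rewrite exprS mulSn subnDA !mulNr -mulrA addNr.
Qed.

Lemma mul_binomC c j c' j' a :
  mul_binom c j (mul_binom c' j' a) = mul_binom c' j' (mul_binom c j a).
Proof.
apply: funext => m; rewrite /mul_binom.
case: (leqP j m) => jm; case: (leqP j' m) => j'm.
- have -> : (j' <= m - j)%N = (j + j' <= m)%N by apply/idP/idP => ?; lia.
  have -> : (j <= m - j')%N = (j + j' <= m)%N by apply/idP/idP => ?; lia.
  rewrite subnAC; case: (j + j' <= m)%N; ring.
- have -> : (j' <= m - j)%N = false by apply/negbTE; rewrite -ltnNge; lia.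
  ring.
- have -> : (j <= m - j')%N = false by apply/negbTE; rewrite -ltnNge; lia.
  ring.
- ring.
Qed.

Lemma mul_binom_lt c j a m : (m < j)%N -> mul_binom c j a m = a m.
Proof. by rewrite /mul_binom ltnNge => /negbTE ->; rewrite addr0. Qed.

Lemma div_binom_lt c j a m : (m < j)%N -> div_binom c j a m = a m.
Proof.
by move=> mj; rewrite /div_binom divn_small // big_ord1 expr0 mul1r mul0n subn0.
Qed.

Definition eq_upto (n : nat) a b := forall m, (m <= n)%N -> a m = b m.

Lemma eq_upto_div_binom n c j a b :
  eq_upto n a b -> eq_upto n (div_binom c j a) (div_binom c j b).
Proof.
move=> e m mn; rewrite /div_binom; apply: eq_bigr => t _.
by rewrite e // (leq_trans (leq_subr _ _) mn).
Qed.

Definition cauchy_prod a b : nat -> R :=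
  fun m => \sum_(i < m.+1) a i * b (m - i)%N.

Definition seq1 : nat -> R := fun m => (m == 0%N)%:R.

Lemma cauchy_prod1s b : cauchy_prod seq1 b = b.
Proof.
apply: funext => m; rewrite /cauchy_prod big_ord_recl /= /seq1 /= mul1r subn0.
by rewrite big1 ?addr0 // => i _; rewrite mul0r.
Qed.

Lemma cauchy_prod_mul_binoml c j a b :
  cauchy_prod (mul_binom c j a) b = mul_binom c j (cauchy_prod a b).
Proof.
apply: funext => m; rewrite /cauchy_prod /mul_binom.
under eq_bigr do rewrite mulrDl.
rewrite big_split /=; congr (_ + _).
rewrite -(big_mkord xpredT
  (fun i => (if (j <= i)%N then c * a (i - j)%N else 0) * b (m - i)%N)).
case: leqP => jm.
  rewrite (big_cat_nat _ (n := j)) //= ?(leq_trans jm) //.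
  rewrite big_nat big1 ?add0r; last first.
    by move=> i /andP[_ ij]; rewrite leqNgt ij mul0r.
  rewrite -{1}(add0n j) big_addn mulr_sumr big_mkord subSn //.
  apply: eq_bigr => i _; rewrite leq_addl addnK -mulrA.
  by rewrite subnDA subnAC.
rewrite big_nat big1 // => i /andP[_ im]; rewrite ifN ?mul0r //.
by rewrite -ltnNge (leq_trans im).
Qed.

End BinomialFactors.

Arguments seq1 {R}.

Section WeightedNorm.
Variable R : realFieldType.
Implicit Types (a b u v w : nat -> R) (c rho : R).

Definition wnorm (N : nat) rho a := \sum_(m < N) `|a m| * rho ^+ m.

Lemma wnorm_ge0 N rho a : 0 <= rho -> 0 <= wnorm N rho a.
Proof. by move=> r0; apply: sumr_ge0 => i _; rewrite mulr_ge0 ?exprn_ge0. Qed.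

Lemma wnorm_leN M N rho a : 0 <= rho -> (M <= N)%N ->
  wnorm M rho a <= wnorm N rho a.
Proof.
move=> r0 MN; rewrite /wnorm (big_ord_widen N (fun m => `|a m| * rho ^+ m) MN).
rewrite [X in _ <= X](bigID (fun i : 'I_N => (i < M)%N)) /= lerDl.
by apply: sumr_ge0 => i _; rewrite mulr_ge0 ?exprn_ge0.
Qed.

Lemma wnorm_ler N r1 r2 a : 0 <= r1 -> r1 <= r2 -> wnorm N r1 a <= wnorm N r2 a.
Proof.
move=> h1 h2; rewrite /wnorm; apply: ler_sum => i _; apply: ler_wpM2l => //.
by apply: lerXn2r; rewrite ?nnegrE // (le_trans h1 h2).
Qed.

Lemma wnorm_shift N j rho a : 0 <= rho ->
  \sum_(m < N) (if (j <= m)%N then `|a (m - j)%N| * rho ^+ m else 0)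
  <= rho ^+ j * wnorm N rho a.
Proof.
move=> r0; rewrite -(big_mkord xpredT
  (fun m => if (j <= m)%N then `|a (m - j)%N| * rho ^+ m else 0)).
case: (leqP N j) => Nj.
  rewrite big_nat big1; first by rewrite mulr_ge0 ?exprn_ge0 ?wnorm_ge0.
  by move=> i /andP[_ iN]; rewrite ifN // -ltnNge (leq_trans iN).
rewrite (big_cat_nat (leq0n j) (ltnW Nj)).
rewrite big_nat big1 ?add0r; last by move=> i /andP[_ ij]; rewrite leqNgt ij.
rewrite -{1}(add0n j) big_addn big_mkord.
rewrite (eq_bigr (fun i : 'I_(N - j) => rho ^+ j * (`|a i| * rho ^+ i))); last first.
  by move=> i _; rewrite leq_addl addnK exprD mulrA mulrC.
rewrite -mulr_sumr Monoid.mul1m; apply: ler_wpM2l; first exact: exprn_ge0.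
exact: wnorm_leN (leq_subr j N).
Qed.

Lemma wnorm_le_binom N rho c j u v w : 0 <= rho ->
  (forall m, `|u m| <= `|v m| + (if (j <= m)%N then `|c| * `|w (m - j)%N| else 0)) ->
  wnorm N rho u <= wnorm N rho v + `|c| * rho ^+ j * wnorm N rho w.
Proof.
move=> r0 uvw.
have termwise : wnorm N rho u <= \sum_(m < N) (`|v m| * rho ^+ m +
     `|c| * (if (j <= m)%N then `|w (m - j)%N| * rho ^+ m else 0)).
  apply: ler_sum => m _.
  apply: le_trans (ler_wpM2r (exprn_ge0 m r0) (uvw m)) _.
  by rewrite mulrDl; case: ifP => _; rewrite ?mulr0 ?mul0r // mulrA.
rewrite big_split /= -mulr_sumr in termwise.
apply: le_trans termwise _; apply: lerD => //.
rewrite -mulrA; apply: ler_wpM2l => //; exact: wnorm_shift.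
Qed.

Lemma wnorm_mul_binom N rho c j a : 0 <= rho ->
  wnorm N rho (mul_binom c j a) <= (1 + `|c| * rho ^+ j) * wnorm N rho a.
Proof.
move=> r0; rewrite mulrDl mul1r; apply: wnorm_le_binom => // m.
rewrite /mul_binom; apply: (le_trans (ler_normD _ _)); apply: lerD => //.
by case: ifP => _; rewrite ?normr0 // normrM.
Qed.

(* d = a / (1 + c T^j) satisfies d = a - c T^j d, so wnorm_le_binom bounds
   the norm of d in terms of itself. *)
Lemma wnorm_div_binom N rho c j a : 0 <= rho -> (0 < j)%N -> `|c| * rho ^+ j < 1 ->
  wnorm N rho (div_binom c j a) <= wnorm N rho a / (1 - `|c| * rho ^+ j).
Proof.
move=> r0 j0 lt1; rewrite ler_pdivlMr ?subr_gt0 //.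
suff : wnorm N rho (div_binom c j a)
    <= wnorm N rho a + `|c| * rho ^+ j * wnorm N rho (div_binom c j a).
  by rewrite mulrBr mulr1 lerBlDr mulrC.
apply: wnorm_le_binom => // m.
have -> : div_binom c j a m
    = a m - (if (j <= m)%N then c * div_binom c j a (m - j)%N else 0).
  by rewrite -{2}(div_binomK c j0 a) /mul_binom addrK.
apply: (le_trans (ler_normB _ _)); apply: lerD => //.
by case: ifP => _; rewrite ?normr0 // normrM.
Qed.

Lemma sum_triangle (F : nat -> nat -> R) N :
  \sum_(m < N) \sum_(i < m.+1) F i (m - i)%N = \sum_(i < N) \sum_(k < N - i) F i k.
Proof.
elim: N => [|N IH]; first by rewrite !big_ord0.
rewrite big_ord_recr /= IH [in RHS]big_ord_recr /= subSnn big_ord1.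
rewrite [in RHS](eq_bigr (fun i : 'I_N => \sum_(k < N - i) F i k + F i (N - i)%N)).
  by rewrite big_split /= -!addrA; congr (_ + _); rewrite big_ord_recr /= subnn.
by move=> i _; rewrite subSn ?(ltnW (ltn_ord i)) // big_ord_recr.
Qed.

Lemma wnorm_cauchy_prod N rho a b : 0 <= rho ->
  wnorm N rho (cauchy_prod a b) <= wnorm N rho a * wnorm N rho b.
Proof.
move=> r0; pose F i k := (`|a i| * rho ^+ i) * (`|b k| * rho ^+ k).
have termwise :
    wnorm N rho (cauchy_prod a b) <= \sum_(m < N) \sum_(i < m.+1) F i (m - i)%N.
  apply: ler_sum => m _; rewrite /cauchy_prod.
  apply: (le_trans (ler_wpM2r (exprn_ge0 m r0) (ler_norm_sum _ _ _))).
  rewrite mulr_suml; apply: ler_sum => i _.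
  by rewrite /F normrM mulrACA -exprD subnKC ?(leq_ord i).
apply: le_trans termwise _; rewrite sum_triangle /wnorm mulr_suml.
apply: ler_sum => i _; rewrite mulr_sumr.
rewrite (big_ord_widen N (F i) (leq_subr i N)).
rewrite [X in _ <= X](bigID (fun k : 'I_N => (k < N - i)%N)) /= lerDl.
by apply: sumr_ge0 => k _; rewrite !mulr_ge0 ?exprn_ge0.
Qed.

Lemma wnorm_seq1 N rho : wnorm N rho seq1 <= 1.
Proof.
case: N => [|N]; first by rewrite /wnorm big_ord0.
rewrite /wnorm big_ord_recl big1 ?addr0 /seq1 /=; first by rewrite normr1 mul1r.
by move=> i _; rewrite normr0 mul0r.
Qed.

End WeightedNorm.

Section ProductBound.
Variable R : realType.
Implicit Types (rho c : R).

Definition factor_bound rho (j : nat) := 1 + rho ^+ j.+1 / (1 - rho).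
Definition prod_bound rho := expR (((1 - rho) ^+ 2)^-1).

Lemma factor_bound_ge0 rho j : 0 <= rho < 1 -> 0 <= factor_bound rho j.
Proof.
by case/andP=> r0 r1; rewrite addr_ge0 ?divr_ge0 ?exprn_ge0 // subr_ge0 ltW.
Qed.

Lemma prod_factor_bound_le rho n : 0 <= rho < 1 ->
  \prod_(j < n) factor_bound rho j <= prod_bound rho.
Proof.
move=> /[dup] rr /andP[r0 r1]; have r1' : 0 < 1 - rho by rewrite subr_gt0.
have prod_le_exp k :
    \prod_(j < k) factor_bound rho j <= expR (\sum_(j < k) rho ^+ j.+1 / (1 - rho)).
  elim: k => [|k IH]; first by rewrite !big_ord0 expR0.
  rewrite !big_ord_recr /= expRD; apply: ler_pM => //; last exact: expR_ge1Dx.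
    by apply: prodr_ge0 => i _; exact: factor_bound_ge0.
  exact: factor_bound_ge0.
apply: (le_trans (prod_le_exp n)); rewrite /prod_bound ler_expR.
rewrite -mulr_suml expr2 invfM ler_pM2r ?invr_gt0 //.
apply: (@le_trans _ _ (\sum_(j < n) rho ^+ j)).
  by apply: ler_sum => j _; rewrite exprS ler_piMl ?exprn_ge0 // ltW.
have geo : (1 - rho) * \sum_(j < n) rho ^+ j = 1 - rho ^+ n.
  by rewrite -opprB mulNr -subrX1 opprB.
rewrite -(ler_pM2l r1') geo mulfV ?gt_eqF //.
by rewrite lerBlDr lerDl exprn_ge0.
Qed.

Lemma mul_binom_factor_le rho c j : 0 <= rho < 1 -> `|c| <= 1 ->
  1 + `|c| * rho ^+ j.+1 <= factor_bound rho j.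
Proof.
move=> /andP[r0 r1] c1; rewrite /factor_bound lerD2l.
have hp : 0 <= rho ^+ j.+1 by rewrite exprn_ge0.
apply: (@le_trans _ _ (rho ^+ j.+1)); first by rewrite ler_piMl.
rewrite ler_pdivlMr ?subr_gt0 //; nra.
Qed.

Lemma div_binom_factor_le rho c (j : nat) (a : R) : 0 <= rho < 1 -> `|c| <= 1 ->
  0 <= a -> a / (1 - `|c| * rho ^+ j.+1) <= factor_bound rho j * a.
Proof.
move=> /andP[r0 r1] c1 a0; rewrite /factor_bound.
set p := rho ^+ j.+1.
have p0 : 0 <= p by rewrite exprn_ge0.
have p_le : p <= rho by rewrite /p exprS ler_piMr // exprn_ile1 // ltW.
have cp_le : `|c| * p <= p by rewrite ler_piMl.
have cp0 : 0 <= `|c| * p by rewrite mulr_ge0.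
set y := `|c| * p in cp_le cp0 *; set z := p / (1 - rho).
have hz : z * (1 - rho) = p by rewrite /z divfK // gt_eqF // subr_gt0.
have z0 : 0 <= z by rewrite divr_ge0 // subr_ge0 ltW.
have key : 1 <= (1 + z) * (1 - y) by nra.
by rewrite ler_pdivrMr; nra.
Qed.

End ProductBound.

Section Construction.
Variables (R : realType) (x : R).
Implicit Types (a b G : nat -> R).

Definition mul_root a := mul_binom (- x^-1) 1 a.
Definition div_root a := div_binom (- x^-1) 1 a.

(* [fpart n] is the polynomial (1 - T/x) (1 + c_1 T) ... (1 + c_n T^n); the
   correction c_(n+1) = corr (n+1) in (-1, 0] turns the coefficient of
   T^(n+1) into the integer floor (fpart n (n+1)), and leaves lower ones
   unchanged.  Its limit f = fseries thus has integral coefficients. *)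
Fixpoint fpart n : nat -> R :=
  if n is n'.+1 then
    mul_binom ((Num.floor (fpart n' n))%:~R - fpart n' n) n (fpart n')
  else mul_root seq1.

Definition corr n : R :=
  if n is n'.+1 then (Num.floor (fpart n' n))%:~R - fpart n' n else 0.

Lemma fpartS n : fpart n.+1 = mul_binom (corr n.+1) n.+1 (fpart n).
Proof. by []. Qed.

Fixpoint mul_factors n a : nat -> R :=
  if n is n'.+1 then mul_binom (corr n) n (mul_factors n' a) else a.

Fixpoint div_factors n a : nat -> R :=
  if n is n'.+1 then div_factors n' (div_binom (corr n) n a) else a.

Definition fseries m := fpart m m.
Definition wseries m := mul_factors m seq1 m.
Definition fquot G m := div_factors m (div_root G) m.

Lemma fpartE n : fpart n = mul_root (mul_factors n seq1).
Proof. by elim: n => [//|n IH]; rewrite fpartS IH /mul_root mul_binomC. Qed.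

Lemma cauchy_prod_mul_factorsl n a b :
  cauchy_prod (mul_factors n a) b = mul_factors n (cauchy_prod a b).
Proof. by elim: n => [//|n IH] /=; rewrite cauchy_prod_mul_binoml IH. Qed.

Lemma div_factorsK n : cancel (div_factors n) (mul_factors n).
Proof. by elim: n => [//|n IH] a /=; rewrite IH div_binomK. Qed.

Lemma cauchy_prod_fpart_div n G :
  cauchy_prod (fpart n) (div_factors n (div_root G)) = G.
Proof.
rewrite fpartE cauchy_prod_mul_binoml cauchy_prod_mul_factorsl cauchy_prod1s.
by rewrite div_factorsK div_binomK.
Qed.

Lemma fpart_stable n k : (k <= n)%N -> fpart n k = fseries k.
Proof.
elim: n => [|n IH]; first by rewrite leqn0 => /eqP->.
rewrite leq_eqVlt => /orP[/eqP->//|]; rewrite ltnS => kn.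
by rewrite fpartS mul_binom_lt ?ltnS // IH.
Qed.

Lemma mul_factors_stable n a k : (k <= n)%N ->
  mul_factors n a k = mul_factors k a k.
Proof.
elim: n => [|n IH]; first by rewrite leqn0 => /eqP->.
rewrite leq_eqVlt => /orP[/eqP->//|]; rewrite ltnS => kn.
by rewrite /= mul_binom_lt ?ltnS // IH.
Qed.

Lemma eq_upto_div_factors n j a b :
  eq_upto n a b -> eq_upto n (div_factors j a) (div_factors j b).
Proof. by elim: j a b => [//|j IH] a b e /=; apply/IH/eq_upto_div_binom. Qed.

Lemma div_factors_stable n a k : (k <= n)%N ->
  div_factors n a k = div_factors k a k.
Proof.
elim: n a => [|n IH] a; first by rewrite leqn0 => /eqP->.
rewrite leq_eqVlt => /orP[/eqP->//|]; rewrite ltnS => kn /=.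
have e : eq_upto k (div_binom (corr n.+1) n.+1 a) a.
  by move=> m mk; rewrite div_binom_lt // ltnS (leq_trans mk kn).
by rewrite -IH // (eq_upto_div_factors n e).
Qed.

Lemma fseries_mul_root : fseries = mul_root wseries.
Proof.
apply: funext => m; rewrite /fseries fpartE /mul_root /mul_binom /wseries.
by case: m => [//|m]; rewrite subn1 /= (mul_binom_lt _ _ (ltnSn m)).
Qed.

Lemma cauchy_prod_fseries_fquot G m : cauchy_prod fseries (fquot G) m = G m.
Proof.
rewrite -[RHS](congr1 (fun a => a m) (cauchy_prod_fpart_div m G)).
apply: eq_bigr => i _; rewrite fpart_stable ?(leq_ord i) //.
by rewrite /fquot div_factors_stable // leq_subr.
Qed.

Lemma fpart0 n : fpart n 0 = 1.
Proof.
elim: n => [|n IH]; last by rewrite fpartS mul_binom_lt.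
by rewrite /= /mul_root /mul_binom /seq1 addr0.
Qed.

Lemma fseries0 : fseries 0 = 1.
Proof. exact: fpart0. Qed.

Lemma fseries_int m : fseries m \is a Num.int.
Proof.
case: m => [|m]; first by rewrite fseries0.
by rewrite /fseries fpartS /mul_binom leqnn subnn fpart0 mulr1 addrC subrK intr_int.
Qed.

Lemma normr_corr_le1 n : `|corr n| <= 1.
Proof.
case: n => [|n] /=; first by rewrite normr0.
have /andP[lo hi] := floor_itv (fpart n n.+1).
rewrite intrD in hi; rewrite ler_norml; apply/andP; split; lra.
Qed.

(* f_0 = 1, so h = G / f is computed by integral back-substitution. *)
Lemma fquot_int G : (forall m, G m \is a Num.int) ->
  forall m, fquot G m \is a Num.int.
Proof.
move=> Gint; elim/ltn_ind => m IH; have := cauchy_prod_fseries_fquot G m.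
rewrite /cauchy_prod big_ord_recl /= subn0 fseries0 mul1r.
move=> /(canRL (addrK _)) ->; rewrite rpredB ?Gint // rpred_sum // => i _.
rewrite rpredM ?fseries_int // IH // /bump leq0n add1n; have := ltn_ord i; lia.
Qed.

Lemma eq_upto_fquot n G G' : eq_upto n G G' -> fquot G n = fquot G' n.
Proof.
by move=> e; rewrite /fquot (eq_upto_div_factors n (eq_upto_div_binom _ _ e)).
Qed.

Lemma mul_root_telescope Z N : x != 0 ->
  \sum_(i < N.+1) mul_root Z i * x ^+ i = Z N * x ^+ N.
Proof.
move=> x0; elim: N => [|N IH].
  by rewrite big_ord1 /mul_root /mul_binom /= addr0.
by rewrite big_ord_recr /= IH /mul_root /mul_binom /= subn1 /= exprS; field.
Qed.

Section NormBounds.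
Variable rho : R.
Hypothesis rho01 : 0 <= rho < 1.

Lemma wnorm_mul_factors N n a :
  wnorm N rho (mul_factors n a) <= \prod_(j < n) factor_bound rho j * wnorm N rho a.
Proof.
have r0 : 0 <= rho by case/andP: rho01.
elim: n => [|n IH]; first by rewrite big_ord0 mul1r.
rewrite /= big_ord_recr /= (mulrC _ (factor_bound rho n)) -mulrA.
apply: (le_trans (wnorm_mul_binom _ _ _ _ r0)).
apply: ler_pM => //; first by rewrite addr_ge0 ?mulr_ge0 ?exprn_ge0.
  exact: wnorm_ge0.
exact: mul_binom_factor_le (normr_corr_le1 n.+1).
Qed.

Lemma wnorm_div_factors N n a :
  wnorm N rho (div_factors n a) <= \prod_(j < n) factor_bound rho j * wnorm N rho a.
Proof.
have /andP[r0 r1] := rho01.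
elim: n a => [|n IH] a; first by rewrite big_ord0 mul1r.
rewrite /= big_ord_recr /= -mulrA; apply: (le_trans (IH _)).
apply: ler_wpM2l; first by apply: prodr_ge0 => i _; exact: factor_bound_ge0.
have lt1 : `|corr n.+1| * rho ^+ n.+1 < 1.
  apply: le_lt_trans (ler_piMl (exprn_ge0 _ r0) (normr_corr_le1 _)) _.
  by rewrite exprn_ilt1.
apply: (le_trans (wnorm_div_binom _ _ r0 (ltn0Sn n) lt1)).
by apply: div_binom_factor_le; [|exact: normr_corr_le1|exact: wnorm_ge0].
Qed.

Lemma wnorm_wseries N : wnorm N rho wseries <= prod_bound rho.
Proof.
have /andP[r0 _] := rho01.
have -> : wnorm N rho wseries = wnorm N rho (mul_factors N seq1).
  by apply: eq_bigr => i _; rewrite /wseries mul_factors_stable // ltnW.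
apply: (le_trans (wnorm_mul_factors _ _ _)); rewrite -[prod_bound _]mulr1.
apply: ler_pM; [|exact: wnorm_ge0 | exact: prod_factor_bound_le | exact: wnorm_seq1].
by apply: prodr_ge0 => i _; exact: factor_bound_ge0.
Qed.

Lemma wnorm_fseries N : wnorm N rho fseries <= (1 + `|x^-1| * rho) * prod_bound rho.
Proof.
have /andP[r0 _] := rho01.
rewrite fseries_mul_root; apply: (le_trans (wnorm_mul_binom _ _ _ _ r0)).
by rewrite normrN expr1 ler_wpM2l ?addr_ge0 ?mulr_ge0 // wnorm_wseries.
Qed.

Lemma wnorm_fquot N G :
  wnorm N rho (fquot G) <= prod_bound rho * wnorm N rho (div_root G).
Proof.
have /andP[r0 _] := rho01.
have -> : wnorm N rho (fquot G) = wnorm N rho (div_factors N (div_root G)).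
  by apply: eq_bigr => i _; rewrite /fquot div_factors_stable // ltnW.
apply: (le_trans (wnorm_div_factors _ _ _)); apply: ler_wpM2r.
  exact: wnorm_ge0.
exact: prod_factor_bound_le.
Qed.

End NormBounds.
End Construction.

Lemma sum_geo_lt_le (R : realFieldType) (q : R) N i : 1 < q ->
  \sum_(m < N) (if (m < i)%N then q ^+ m else 0) <= q ^+ i / (q - 1).
Proof.
move=> q1; rewrite ler_pdivlMr ?subr_gt0 //.
have geo : (q - 1) * \sum_(m < N) (if (m < i)%N then q ^+ m else 0)
    = q ^+ minn N i - 1.
  elim: N => [|N IH]; first by rewrite big_ord0 mulr0 min0n expr0 subrr.
  rewrite big_ord_recr /= mulrDr IH; case: (ltnP N i) => Ni.
    by rewrite (_ : minn N.+1 i = N.+1) ?exprS; [ring | lia].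
  by rewrite (_ : minn N.+1 i = i) ?mulr0 ?addr0 //; lia.
rewrite mulrC geo lerBlDr (le_trans (ler_weXn2l (ltW q1) (geq_minr N i))) //.
by rewrite lerDl.
Qed.

Section DivRoot.
Variables (R : realType) (x r : R).
Hypotheses (x_gt0 : 0 < x) (x_lt_r : x < r).
Implicit Types (G : nat -> R).

Lemma div_root_coef G m : div_root x G m * x ^+ m = \sum_(i < m.+1) G i * x ^+ i.
Proof.
rewrite /div_root /div_binom divn1 opprK mulr_suml.
rewrite [RHS](reindex_inj rev_ord_inj) /=.
apply: eq_bigr => t _; rewrite muln1 subSS.
have tm : (t <= m)%N by rewrite -ltnS.
have xt : x ^+ t != 0 by rewrite expf_neq0 // gt_eqF.
have -> : x ^+ m = x ^+ (m - t) * x ^+ t by rewrite -exprD subnK.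
by rewrite exprVn [x ^+ (m - t) * _]mulrC mulrA [_ * x ^+ t]mulrC mulrA mulfV // mul1r.
Qed.

Definition peval G (M : nat) := \sum_(i < M) G i * x ^+ i.

Lemma div_root_tail G m M : (m < M)%N ->
  div_root x G m * x ^+ m = peval G M - \sum_(i < M | (m < i)%N) G i * x ^+ i.
Proof.
move=> mM; rewrite div_root_coef /peval (bigID (fun i : 'I_M => (i < m.+1)%N)) /=.
have -> : \sum_(i < M | ~~ (i < m.+1)%N) G i * x ^+ i
    = \sum_(i < M | (m < i)%N) G i * x ^+ i.
  by apply: eq_bigl => i; rewrite ltnS ltnNge.
by rewrite addrK (big_ord_widen M (fun i => G i * x ^+ i) mM).
Qed.

(* By div_root_tail, r^m times coefficient m of G / (1 - T/x) is (r/x)^m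
   times a tail of the evaluation of G at x; exchanging the sums turns the
   tails back into a weighted norm of G. *)
Lemma wnorm_div_root_partial G N M : (N <= M)%N ->
  wnorm N r (div_root x G)
    <= `|peval G M| * \sum_(m < N) (r / x) ^+ m + x / (r - x) * wnorm M r G.
Proof.
move=> NM; set q := r / x.
have x0 : 0 <= x := ltW x_gt0.
have q1 : 1 < q by rewrite /q ltr_pdivlMr // mul1r.
have rq m : r ^+ m = x ^+ m * q ^+ m by rewrite -exprMn /q mulrC divfK ?gt_eqF.
have termwise m : (m < N)%N -> `|div_root x G m| * r ^+ m
    <= (`|peval G M| + \sum_(i < M | (m < i)%N) `|G i| * x ^+ i) * q ^+ m.
  move=> mN; rewrite rq mulrA -(ger0_norm (exprn_ge0 m x0)) -normrM.
  rewrite (div_root_tail _ (leq_trans mN NM)).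
  rewrite ler_wpM2r ?exprn_ge0 ?(ltW (lt_trans _ q1)) //.
  apply: (le_trans (ler_normB _ _)); rewrite lerD2l.
  apply: (le_trans (ler_norm_sum _ _ _)); apply: ler_sum => i _.
  by rewrite normrM (ger0_norm (exprn_ge0 i x0)).
apply: le_trans; first by apply: ler_sum => m _; exact: termwise.
under eq_bigr do rewrite mulrDl.
rewrite big_split /= -mulr_sumr lerD2l.
have exchange : \sum_(m < N) (\sum_(i < M | (m < i)%N) `|G i| * x ^+ i) * q ^+ m
    = \sum_(i < M) (`|G i| * x ^+ i) *
        \sum_(m < N) (if (m < i)%N then q ^+ m else 0).
  under eq_bigr do rewrite big_mkcond mulr_suml.
  rewrite exchange_big /=; apply: eq_bigr => i _; rewrite mulr_sumr.
  by apply: eq_bigr => m _; case: ifP => _; rewrite ?mulr0 ?mul0r.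
rewrite exchange.
apply: (@le_trans _ _ (\sum_(i < M) (`|G i| * x ^+ i) * (q ^+ i / (q - 1)))).
  apply: ler_sum => i _; apply: ler_wpM2l; first by rewrite mulr_ge0 ?exprn_ge0.
  exact: sum_geo_lt_le.
have -> : (q - 1)^-1 = x / (r - x).
  by rewrite /q -[1](@mulfV _ x) ?gt_eqF // -mulrBl invfM invrK mulrC.
suff -> : \sum_(i < M) `|G i| * x ^+ i * (q ^+ i * (x / (r - x)))
    = x / (r - x) * wnorm M r G by [].
by rewrite /wnorm mulr_sumr; apply: eq_bigr => i _; rewrite rq; ring.
Qed.

Lemma wnorm_div_root G B : (forall M, wnorm M r G <= B) -> peval G @ \oo --> 0 ->
  forall N, wnorm N r (div_root x G) <= x / (r - x) * B.
Proof.
move=> GB peval0 N.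
set C := \sum_(m < N) (r / x) ^+ m.
have bound_cvg : (fun M => `|peval G M| * C + x / (r - x) * B) @ \oo
    --> 0 * C + x / (r - x) * B.
  apply: cvgD; last exact: cvg_cst.
  by apply: cvgMl; rewrite -(normr0 R); apply: cvg_norm.
rewrite -[X in _ <= X](add0r) -[X in X + _](mul0r C).
apply: (ler_cvg_to (cvg_cst _) bound_cvg); near=> M.
have NM : (N <= M)%N by near: M; exists N.
apply: (le_trans (wnorm_div_root_partial G NM)).
by rewrite lerD2l ler_wpM2l ?GB // divr_ge0 ?subr_ge0 ?(ltW x_gt0) ?(ltW x_lt_r).
Unshelve. all: by end_near.
Qed.

End DivRoot.

Section AbsBoundedSeries.
Variable R : realType.
Implicit Types (v : nat -> R) (B : R).

Lemma cvgn_series_abs_bounded v B : (forall L, \sum_(i < L) `|v i| <= B) ->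
  cvgn (series v).
Proof.
move=> vB; apply: normed_cvg; apply: nondecreasing_is_cvgn.
  by apply: (@nondecreasing_series R (fun k => `|v k|) xpredT 0) => n _ _.
exists B => _ [n _ <-]; apply: le_trans (vB n).
by change (series (fun k => `|v k|) n <= \sum_(i < n) `|v i|); rewrite seriesEord.
Qed.

Lemma cvg0_abs_bounded v B : (forall L, \sum_(i < L) `|v i| <= B) ->
  v @ \oo --> 0.
Proof. by move=> /cvgn_series_abs_bounded /cvg_series_cvg_0. Qed.

End AbsBoundedSeries.

Lemma near_all_leq (T : topologicalType) (s : T) (P : nat -> T -> Prop) :
  (forall i, \forall t \near s, P i t) ->
  forall m, \forall t \near s, forall i, (i <= m)%N -> P i t.
Proof.
move=> P_near; elim=> [|m IH].
  by apply: filterS (P_near 0%N) => t h i; rewrite leqn0 => /eqP ->.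
apply: filterS2 IH (P_near m.+1) => t h1 h2 i.
by rewrite leq_eqVlt => /orP[/eqP -> //|]; rewrite ltnS; apply: h1.
Qed.

Section LaurentCoefficients.
Variables (R : realType) (S : topologicalType).
Implicit Types (a : int -> S -> int) (s : S) (k : int).

Lemma theta_lim x a s k (l : R) : (forall n, n < k -> a n s = 0) ->
  (fun N : nat => \sum_(i < N) (a (k + i%:Z) s)%:~R * x ^ (k + i%:Z)) @ \oo --> l ->
  theta x a s = l.
Proof.
move=> a0 hu; rewrite /theta; apply: cvg_lim; first exact: Rhausdorff.
set u := fun N : nat => \sum_(i < N) (a (k + i%:Z) s)%:~R * x ^ (k + i%:Z).
have symmetric_sum (N : nat) : `|k| <= N%:Z ->
    \sum_(i < (2 * N).+1) (a (i%:Z - N%:Z) s)%:~R * x ^ (i%:Z - N%:Z)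
    = u (absz (N%:Z - k)%R).+1.
  move=> kN.
  have -> : (2 * N).+1 = (absz (N%:Z + k)%R + (absz (N%:Z - k)%R).+1)%N by lia.
  rewrite big_split_ord /= big1 ?add0r => [|i _]; last first.
    by rewrite a0 ?mul0r //; have := ltn_ord i; lia.
  apply: eq_bigr => j _.
  by have -> : (absz (N%:Z + k)%R + j)%N%:Z - N%:Z = k + j%:Z by lia.
apply/cvgrPdist_lt => e e0.
have [n0 _ near_l] := (cvgrPdist_lt u l).1 hu e e0.
exists (n0 + absz k)%N => // N /= kN.
by rewrite symmetric_sum; [apply: near_l => /=; lia | lia].
Qed.

Lemma theta_peval x a s k (l : R) : x != 0 -> (forall n, n < k -> a n s = 0) ->
  peval x (fun i => (a (k + i%:Z) s)%:~R) @ \oo --> l -> theta x a s = x ^ k * l.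
Proof.
move=> x0 a0 pl; apply: theta_lim a0 _.
have -> : (fun N : nat => \sum_(i < N) (a (k + i%:Z) s)%:~R * x ^ (k + i%:Z))
    = (fun N => x ^ k * peval x (fun i => (a (k + i%:Z) s)%:~R) N).
  apply: funext => N; rewrite /peval mulr_sumr; apply: eq_bigr => i _.
  by rewrite expfzDr // mulrCA.
exact: cvgMl_tmp.
Qed.

Lemma wnorm_coef_bound a k (c r : R) s : 0 < r ->
  (forall N, \sum_(i < N) ((`|a (k + i%:Z) s|)%:~R * r ^ (k + i%:Z)) <= c) ->
  forall M, wnorm M r (fun i => (a (k + i%:Z) s)%:~R) <= c / r ^ k.
Proof.
move=> r0 ac M; rewrite ler_pdivlMr ?exprz_gt0 //.
suff -> : wnorm M r (fun i => (a (k + i%:Z) s)%:~R) * r ^ k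
    = \sum_(i < M) (`|a (k + i%:Z) s|)%:~R * r ^ (k + i%:Z) by apply: ac.
rewrite /wnorm mulr_suml; apply: eq_bigr => i _.
by rewrite intr_norm expfzDr ?gt_eqF // mulrA mulrAC.
Qed.

End LaurentCoefficients.

Definition zsum (F : int -> int) (lo : int) (L : nat) := \sum_(j < L) F (lo + j%:Z).

Lemma zsum_window F lo L lo' L' : lo <= lo' -> lo' + L'%:Z <= lo + L%:Z ->
  (forall a, a < lo' \/ lo' + L'%:Z <= a -> F a = 0) ->
  zsum F lo L = zsum F lo' L'.
Proof.
move=> h1 h2 F0; rewrite /zsum.
have -> : L = (absz (lo' - lo)%R + (L' + absz (lo + L%:Z - lo' - L'%:Z)%R))%N by lia.
rewrite big_split_ord big1 ?add0r => [|j _] /=; last first.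
  by apply: F0; left; have := ltn_ord j; lia.
rewrite big_split_ord /= ?add0r [X in _ + X = _]big1 ?addr0 => [|j _]; last first.
  by apply: F0; right; lia.
by apply: eq_bigr => j _; congr F; lia.
Qed.

Lemma zsum_supp F lo L lo' hi' : lo <= lo' -> hi' < lo + L%:Z ->
  (forall a, a < lo' \/ hi' < a -> F a = 0) ->
  zsum F lo L = if lo' <= hi' then zsum F lo' (absz (hi' - lo' + 1)) else 0.
Proof.
move=> h1 h2 F0; case: ifP => hh.
  by apply: zsum_window; [|lia|move=> a [ha|ha]; apply: F0; [left|right; lia]].
rewrite (@zsum_window F lo L lo 0%N) ?addr0 ?lerDl //.
  by rewrite /zsum big_ord0.
by move=> a _; apply: F0; case: (ltP a lo') => ha; [left | right; lia].
Qed.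

Section LaurentF.
Variables (R : realType) (x : R).

Definition laurent_f (n : int) : int :=
  if n < 0 then 0 else Num.floor (fseries x (absz n)).

Lemma laurent_f_coef (i : nat) : (laurent_f i%:Z)%:~R = fseries x i.
Proof. by rewrite /laurent_f /= floorK // fseries_int. Qed.

Lemma laurent_f_lt0 n : n < 0 -> laurent_f n = 0.
Proof. by rewrite /laurent_f => ->. Qed.

Lemma ZLgt_laurent_f (r : R) : 0 <= r -> r < 1 -> ZLgt r laurent_f.
Proof.
move=> r0 r1; split; first by exists 0; exact: laurent_f_lt0.
exists ((1 + r) / 2); split; first lra.
have r2_01 : 0 <= (1 + r) / 2 < 1 by apply/andP; split; lra.
apply: (cvg0_abs_bounded (B := (1 + `|x^-1| * ((1 + r) / 2)) * prod_bound ((1 + r) / 2))).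
move=> L; apply: le_trans (wnorm_fseries x r2_01 L); apply: ler_sum => i _.
rewrite intr_norm laurent_f_coef normrM normr_id ger0_norm //.
by rewrite exprn_ge0 //; lra.
Qed.

End LaurentF.

Section LaurentProduct.
Variables (R : realType) (x : R) (S : topologicalType) (g h : int -> S -> int).

Lemma laurent_prod_zsum k s n : (forall n, n < k -> h n s = 0) ->
  is_laurent_prod (laurent_f x) h g ->
  g n s = if n < k then 0
          else zsum (fun a => laurent_f x a * h (n - a) s) 0 (absz (n - k)).+1.
Proof.
move=> h_lt [kf [kh [f_lt [h_lt' gE]]]]; set F := fun a => _.
have F0 a : a < Num.max 0 kf \/ n - Num.max kh k < a -> F a = 0.
  rewrite /F; case=> ha.
    case: (ltP a 0) => a0; first by rewrite laurent_f_lt0 ?mul0r.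
    by rewrite f_lt ?mul0r //; lia.
  case: (ltP (n - a) kh) => h1; first by rewrite h_lt' ?mulr0.
  by rewrite h_lt ?mulr0 //; lia.
rewrite gE.
have -> : \sum_(j < (absz (n - (kf + kh))%R).+1)
      laurent_f x (kf + j%:Z) * h (n - kf - j%:Z) s
    = zsum F kf (absz (n - (kf + kh))%R).+1.
  by apply: eq_bigr => j _; rewrite /F; congr (_ * h _ s); lia.
rewrite (@zsum_supp F kf _ (Num.max 0 kf) (n - Num.max kh k)) //; [|lia|lia].
rewrite (@zsum_supp F 0 _ (Num.max 0 kf) (n - Num.max kh k)) //; [|lia|lia].
by case: ifP => h1; case: ifP => h2 //; case: ifP => h3 //; lia.
Qed.

Lemma laurent_prod_coef k s : (forall n, n < k -> h n s = 0) ->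
  is_laurent_prod (laurent_f x) h g ->
  forall m : nat, (g (k + m%:Z) s)%:~R
    = cauchy_prod (fseries x) (fun i => (h (k + i%:Z) s)%:~R) m.
Proof.
move=> h_lt gfh m.
rewrite (laurent_prod_zsum _ h_lt gfh) ifF; last by apply/negbTE; lia.
have -> : absz (k + m%:Z - k)%R = m by lia.
rewrite /zsum rmorph_sum; apply: eq_bigr => j _ /=.
rewrite add0r intrM laurent_f_coef.
by have -> : k + m%:Z - j%:Z = k + (m - j)%N%:Z by have := ltn_ord j; lia.
Qed.

End LaurentProduct.

Section IdealInKernel.
Variables (R : realType) (x r : R) (S : topologicalType).
Hypotheses (x_gt0 : 0 < x) (x_lt_r : x < r) (r_lt1 : r < 1).
Variables (g h : int -> S -> int).

Lemma laurent_prod_theta_eq0 : ZLr r h -> is_laurent_prod (laurent_f x) h g ->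
  forall s, theta x g s = 0.
Proof.
move=> [_ [k [h_lt [c h_bound]]]] gfh s.
have x0 : x != 0 by rewrite gt_eqF.
have x01 : 0 <= x < 1 by rewrite (ltW x_gt0) (lt_trans x_lt_r r_lt1).
set H := fun i : nat => (h (k + i%:Z) s)%:~R : R.
set Z := cauchy_prod (wseries x) H.
have gZ : (fun i : nat => (g (k + i%:Z) s)%:~R : R) = mul_root x Z.
  apply: funext => m; rewrite (laurent_prod_coef (h_lt^~ s) gfh).
  by rewrite fseries_mul_root /mul_root cauchy_prod_mul_binoml.
have Z_to0 : (fun N => Z N * x ^+ N) @ \oo --> 0.
  apply: (cvg0_abs_bounded (B := prod_bound x * (c / r ^ k))) => L.
  have -> : \sum_(i < L) `|Z i * x ^+ i| = wnorm L x Z.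
    by apply: eq_bigr => i _; rewrite normrM (ger0_norm (exprn_ge0 i (ltW x_gt0))).
  apply: (le_trans (wnorm_cauchy_prod _ _ _ (ltW x_gt0))).
  apply: ler_pM; [exact: wnorm_ge0 (ltW x_gt0) | exact: wnorm_ge0 (ltW x_gt0) |
    exact: wnorm_wseries |].
  apply: (le_trans (wnorm_ler _ _ (ltW x_gt0) (ltW x_lt_r))).
  exact: wnorm_coef_bound (lt_trans x_gt0 x_lt_r) (h_bound s) L.
have g_lt n : n < k -> g n s = 0.
  by move=> hn; rewrite (laurent_prod_zsum _ (h_lt^~ s) gfh) hn.
rewrite (theta_peval x0 g_lt (l := 0)) ?mulr0 //.
rewrite gZ -cvg_shiftS; apply: cvg_trans Z_to0; apply: near_eq_cvg; near=> N.
by rewrite /= /peval mul_root_telescope.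
Unshelve. all: by end_near.
Qed.

End IdealInKernel.

Section LaurentDiv.
Variables (R : realType) (x : R) (S : topologicalType).
Variables (g : int -> S -> int) (k : int).

Let G s i : R := (g (k + i%:Z) s)%:~R.

Definition laurent_div (n : int) (s : S) : int :=
  if n < k then 0 else Num.floor (fquot x (G s) (absz (n - k))).

Lemma laurent_div_coef s (i : nat) :
  (laurent_div (k + i%:Z) s)%:~R = fquot x (G s) i.
Proof.
rewrite /laurent_div ifF; last by apply/negbTE; lia.
have -> : absz (k + i%:Z - k)%R = i by lia.
by rewrite floorK // fquot_int // => m; exact: intr_int.
Qed.

Lemma laurent_div_lc : (forall n, locally_constant (g n)) ->
  forall n, locally_constant (laurent_div n).
Proof.
move=> g_lc n s; rewrite /laurent_div; case: ifP => _; first exact: filterE.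
have := near_all_leq (fun i => g_lc (k + i%:Z) s) (absz (n - k)%R).
apply: filterS => t Gts; congr Num.floor; apply: eq_upto_fquot => i hi.
by rewrite /G Gts.
Qed.

Lemma laurent_div_prod : (forall n s, n < k -> g n s = 0) ->
  is_laurent_prod (laurent_f x) laurent_div g.
Proof.
move=> g_lt; exists 0, k; split; first exact: laurent_f_lt0.
split; first by move=> n t hn; rewrite /laurent_div hn.
move=> n s; rewrite add0r; case: ifP => [/g_lt -> //|hn].
apply: (@intr_inj R); rewrite rmorph_sum /=.
have nE : n = k + (absz (n - k))%:Z by lia.
rewrite [in LHS]nE -[LHS]/(G s (absz (n - k)%R)) -(cauchy_prod_fseries_fquot x).
apply: eq_bigr => j _; rewrite intrM add0r laurent_f_coef.
suff -> : n - 0 - j%:Z = k + (absz (n - k) - j)%N%:Z by rewrite laurent_div_coef.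
by have := ltn_ord j; lia.
Qed.

Section KernelInIdeal.
Variables (r c : R).
Hypotheses (x_gt0 : 0 < x) (x_lt_r : x < r) (r_lt1 : r < 1).
Hypothesis g_lc : forall n, locally_constant (g n).
Hypothesis g_lt : forall n s, n < k -> g n s = 0.
Hypothesis g_bound :
  forall s N, \sum_(i < N) ((`|g (k + i%:Z) s|)%:~R * r ^ (k + i%:Z)) <= c.

Lemma theta_eq0_peval s : theta x g s = 0 -> peval x (G s) @ \oo --> 0.
Proof.
move=> theta0; have x0 : x != 0 by rewrite gt_eqF.
have : cvgn (series (fun i => G s i * x ^+ i)).
  apply: (cvgn_series_abs_bounded (B := c / r ^ k)) => L.
  apply: le_trans (wnorm_coef_bound (lt_trans x_gt0 x_lt_r) (g_bound s) L).
  apply: ler_sum => i _; rewrite normrM (ger0_norm (exprn_ge0 i (ltW x_gt0))).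
  have r0 : 0 <= r := ltW (lt_trans x_gt0 x_lt_r).
  by rewrite ler_wpM2l // lerXn2r ?nnegrE ?(ltW x_gt0) ?(ltW x_lt_r).
set l := limn _ => sum_l.
have peval_l : peval x (G s) @ \oo --> l.
  suff -> : peval x (G s) = series (fun i => G s i * x ^+ i) by [].
  by apply: funext => M; rewrite seriesEord.
move: theta0; rewrite (theta_peval x0 (g_lt^~ s) peval_l) => /eqP.
by rewrite mulf_eq0 expfz_eq0 (negbTE x0) andbF /= => /eqP <-.
Qed.

Lemma laurent_div_ZLr : (forall s, theta x g s = 0) -> ZLr r laurent_div.
Proof.
move=> theta0; split; first exact: laurent_div_lc.
exists k; split; first by move=> n t hn; rewrite /laurent_div hn.
exists (r ^ k * (prod_bound r * (x / (r - x) * (c / r ^ k)))) => s N.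
have r0 : 0 < r := lt_trans x_gt0 x_lt_r.
have rk : 0 < r ^ k by rewrite exprz_gt0.
have -> : \sum_(i < N) (`|laurent_div (k + i%:Z) s|)%:~R * r ^ (k + i%:Z)
    = r ^ k * wnorm N r (fquot x (G s)).
  rewrite /wnorm mulr_sumr; apply: eq_bigr => i _.
  by rewrite intr_norm laurent_div_coef expfzDr ?gt_eqF // mulrCA.
have r01 : 0 <= r < 1 by rewrite (ltW r0) r_lt1.
rewrite ler_pM2l //; apply: (le_trans (wnorm_fquot _ r01 _ _)).
rewrite ler_wpM2l ?expR_ge0 //.
apply: wnorm_div_root => // [M|]; last exact: theta_eq0_peval.
exact: wnorm_coef_bound r0 (g_bound s) M.
Qed.

End KernelInIdeal.
End LaurentDiv.

Theorem mainTheorem15 (R : realType) (r r' : R) :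
  0 < r' -> r' < r -> r < 1 ->
  exists f : int -> int, ZLgt r f /\
    forall S : topologicalType,
      compact [set: S] -> hausdorff_space S -> extremally_disconnected S ->
      forall g : int -> S -> int, ZLr r g ->
        ((forall s : S, theta r' g s = 0) <->
         exists h : int -> S -> int, ZLr r h /\ is_laurent_prod f h g).
Proof.
move=> r'_gt0 r'_lt_r r_lt1; exists (laurent_f r').
split; first exact: ZLgt_laurent_f (ltW (lt_trans r'_gt0 r'_lt_r)) r_lt1.
move=> S _ _ _ g g_ZLr; split; last first.
  case=> h [h_ZLr gfh].
  exact: (laurent_prod_theta_eq0 r'_gt0 r'_lt_r r_lt1 h_ZLr gfh).
case: g_ZLr => [g_lc [k [g_lt [c g_bound]]]] theta0.
exists (laurent_div r' g k); split.
  exact: (laurent_div_ZLr r'_gt0 r'_lt_r r_lt1 g_lc g_lt g_bound theta0).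
exact: (laurent_div_prod r' g_lt).
Qed.
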